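(* Let $f=a_0+ a_{1}z+\cdots+a_m z^m\in \mathbb{Z}[z]$ be primitive (the greatest common divisor of its coefficients is $1$). Suppose there exist positive real numbers $\alpha<\beta$ and an index $j\in \{0,1,\ldots,m\}$ such that \[ |a_j| \alpha^j>\sum_{i=0,\, i\neq j}^{m} |a_i|\beta^{i}. \] If there exist natural numbers $n$ and $d$ with $\beta-d\geq n\geq \alpha+d$ such that either $|f(n)|/d$ is a prime, or $|f(n)|/d$ is a prime power coprime to $|f'(n)|$, then $f$ is irreducible in $\mathbb{Z}[z]$.
   Context: $f'$ denotes the derivative of $f$. Natural numbers are positive integers. *)

From HB Require Import structures.
From mathcomp Require Export all_boot all_order all_algebra.
From mathcomp Require Export reals.
Set Implicit Arguments. Unset Strict Implicit. Unset Printing Implicit Defensive.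
Import Order.TTheory GRing.Theory Num.Theory.
Local Open Scope ring_scope.

Definition primitive_poly (f : {poly int}) : Prop :=
  \big[gcdn/0%N]_(i < size f) absz (f`_i) = 1%N.

Definition irreducible_Zpoly (f : {poly int}) : Prop :=
  f != 0 /\ f \isn't a GRing.unit /\
  forall g h : {poly int}, f = g * h -> g \is a GRing.unit \/ h \is a GRing.unit.

(* Every complex root z of f satisfies |z| < alpha or |z| > beta (the j-th term
   dominates f(z) on the annulus alpha <= |z| <= beta), so it lies at distance
   more than d from n. Hence for a nonconstant factor g of f, |g(n)| = |lead g| *
   prod |n - z| over the roots z of g exceeds d, while constant factors are units
   because f is primitive. A factorization f = g h into nonunits would then write
   |f(n)| = d q, with q = p or q = p^k, as a product of two numbers larger than d;
   but q divides one of them (in the prime-power case p cannot divide both g(n)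
   and h(n), as it would then divide f'(n) = g'(n) h(n) + g(n) h'(n)), which
   forces the other to be at most d. *)

From HB Require Import structures.
From mathcomp Require Import all_boot all_order all_algebra reals algC zify lra.
Import Order.TTheory GRing.Theory Num.Theory.
Set Implicit Arguments.
Unset Strict Implicit.

Lemma leq_cofactor (G H d q : nat) : 0 < d -> 0 < q -> G * H = d * q -> q %| G -> H <= d.
Proof.
move=> d_gt0 q_gt0 GH_eq /dvdnP[e G_eq].
have eH_eq : e * H = d by apply/eqP; rewrite -(eqn_pmul2r q_gt0) -GH_eq G_eq; lia.
by rewrite -eH_eq leq_pmull // lt0n; apply: contraTneq d_gt0 => e0; rewrite -eH_eq e0.
Qed.

Lemma prime_split_minn (G H d p : nat) : prime p -> 0 < d -> G * H = d * p ->
  minn G H <= d.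
Proof.
move=> p_pr d_gt0 GH_eq; have p_gt0 := prime_gt0 p_pr.
have : p %| G * H by rewrite GH_eq dvdn_mull.
rewrite Euclid_dvdM // => /orP[pG | pH].
  by rewrite geq_min (leq_cofactor d_gt0 p_gt0 GH_eq pG) orbT.
by rewrite geq_min (leq_cofactor d_gt0 p_gt0 _ pH) // mulnC.
Qed.

Lemma prime_power_split_minn (G H d p k : nat) : prime p -> 0 < d ->
  ~~ ((p %| G) && (p %| H)) -> G * H = d * p ^ k -> minn G H <= d.
Proof.
move=> p_pr d_gt0 not_both GH_eq; have pk_gt0 : 0 < p ^ k by rewrite expn_gt0 prime_gt0.
have : p ^ k %| G * H by rewrite GH_eq dvdn_mull.
move: not_both; rewrite negb_and => /orP[pG | pH].
  rewrite Gauss_dvdr => [pkH|]; last by rewrite coprimeXl // prime_coprime.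
  by rewrite geq_min (leq_cofactor d_gt0 pk_gt0 _ pkH) // mulnC.
rewrite Gauss_dvdl => [pkG|]; last by rewrite coprimeXl // prime_coprime.
by rewrite geq_min (leq_cofactor d_gt0 pk_gt0 GH_eq pkG) orbT.
Qed.

Local Open Scope ring_scope.

Section DominantCoefficient.
Variable C : numDomainType.

Definition dominant_coef (p : {poly C}) (j : nat) (A B : C) : bool :=
  \sum_(i < size p | i != j :> nat) `|p`_i| * B ^+ i < `|p`_j| * A ^+ j.

Lemma dominant_coef_size p j A B : 0 <= B -> dominant_coef p j A B -> (j < size p)%N.
Proof.
move=> B_ge0; rewrite /dominant_coef ltnNge; apply: contraTN => /(nth_default 0) ->.
by rewrite normr0 mul0r le_gtF // sumr_ge0 // => i _; rewrite mulr_ge0 ?exprn_ge0.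
Qed.

Lemma dominant_coef_le p j A B A' B' : 0 <= A -> A <= A' -> 0 <= B' -> B' <= B ->
  dominant_coef p j A B -> dominant_coef p j A' B'.
Proof.
move=> A_ge0 leAA' B'_ge0 leB'B dom; apply: le_lt_trans (lt_le_trans dom _).
  apply: ler_sum => i _; rewrite ler_wpM2l // lerXn2r // nnegrE.
  exact: le_trans leB'B.
by rewrite ler_wpM2l // lerXn2r // nnegrE (le_trans A_ge0).
Qed.

Lemma root_dominant_coef p j A B z : 0 <= A -> 0 <= B ->
  dominant_coef p j A B -> root p z -> `|z| < A \/ B < `|z|.
Proof.
move=> A_ge0 B_ge0 dom /rootP pz0.
have jlt := dominant_coef_size B_ge0 dom.
have [|A_le_z] := real_ltP (normr_real z) (ger0_real A_ge0); first by left.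
have [|z_le_B] := real_ltP (ger0_real B_ge0) (normr_real z); first by right.
suff : `|p`_j| * A ^+ j <= \sum_(i < size p | i != j :> nat) `|p`_i| * B ^+ i.
  by move/(lt_le_trans dom); rewrite ltxx.
move: pz0; rewrite horner_coef (bigD1 (Ordinal jlt)) //= => /eqP.
rewrite addr_eq0 => /eqP pjz.
apply: le_trans (_ : `|p`_j| * `|z| ^+ j <= _).
  by rewrite ler_wpM2l // lerXn2r // nnegrE.
rewrite -normrX -normrM pjz normrN; apply: le_trans (ler_norm_sum _ _ _) _.
by apply: ler_sum => i _; rewrite normrM normrX ler_wpM2l // lerXn2r // nnegrE.
Qed.

End DominantCoefficient.

Lemma root_dominant_coef_dist (C : numDomainType) (p : {poly C}) j (n d : nat) z :
  (d <= n)%N -> dominant_coef p j (n - d)%:R (n + d)%:R -> root p z -> d%:R < `|n%:R - z|.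
Proof.
move=> le_dn dom /(root_dominant_coef (ler0n _ _) (ler0n _ _) dom) [lt_z | gt_z].
  apply: lt_le_trans (lerB_dist _ _); rewrite normr_nat.
  by rewrite ltrBrDr addrC -ltrBrDr -natrB.
rewrite distrC; apply: lt_le_trans (lerB_dist _ _); rewrite normr_nat.
by rewrite ltrBrDr addrC -natrD.
Qed.

Lemma dominant_coef_intr (C : numDomainType) (f : {poly int}) j (A B : C) :
  dominant_coef (map_poly intr f) j A B =
  (\sum_(i < size f | i != j :> nat) `|f`_i|%:~R * B ^+ i < `|f`_j|%:~R * A ^+ j).
Proof.
rewrite /dominant_coef size_map_inj_poly //; last exact: intr_inj.
by rewrite coef_map intr_norm; under eq_bigr => i _ do rewrite coef_map /= -intr_norm.
Qed.

Lemma dominant_coef_int (C : numDomainType) (f : {poly int}) j (A B : int) :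
  dominant_coef (map_poly intr f : {poly C}) j A%:~R B%:~R = dominant_coef f j A B.
Proof.
rewrite dominant_coef_intr /dominant_coef -(ltr_int C) rmorph_sum rmorphM rmorphXn /=.
by under [in RHS]eq_bigr => i _ do rewrite rmorphM rmorphXn.
Qed.

Lemma far_roots_lt_norm_horner (C : numClosedFieldType) (p : {poly C}) (x r : C) :
  1 <= r -> 1 <= `|lead_coef p| -> (1 < size p)%N ->
  (forall z, root p z -> r < `|x - z|) -> r < `|p.[x]|.
Proof.
move=> r_ge1 lc_ge1 p_gt1 far.
have [rs p_eq] := closed_field_poly_normal p.
have far_rs z : z \in rs -> r < `|x - z|.
  move=> z_rs; apply: far; rewrite p_eq rootZ ?root_prod_XsubC //.
  by rewrite lead_coef_eq0 -size_poly_eq0 -lt0n ltnW.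
case: rs p_eq far_rs => [|z rs] p_eq far_rs.
  by move: p_gt1; rewrite p_eq big_nil alg_polyC size_polyC; case: (_ != 0).
rewrite p_eq hornerZ horner_prod big_cons 2!normrM hornerXsubC.
have prod_ge1 : 1 <= \prod_(y <- rs) `|('X - y%:P).[x]|.
  rewrite big_seq; apply: (big_ind (fun t : C => 1 <= t)) => // [s t|y y_rs].
    exact: mulr_ege1.
  by rewrite hornerXsubC (le_trans r_ge1) // ltW // far_rs // inE y_rs orbT.
apply: (lt_le_trans (far_rs z (mem_head z rs))).
by rewrite -[X in X <= _]mul1r ler_pM // ler_peMr // normr_prod.
Qed.

Lemma far_roots_lt_absz_horner (C : numClosedFieldType) (g : {poly int}) (x : int) (d : nat) :
  (0 < d)%N -> (1 < size g)%N ->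
  (forall z : C, root (map_poly intr g) z -> d%:R < `|x%:~R - z|) -> (d < `|g.[x]|)%N.
Proof.
move=> d_gt0 g_gt1 far; rewrite -(ltr_nat C) natr_absz intr_norm -horner_map /=.
apply: far_roots_lt_norm_horner => //; first by rewrite ler1n.
  rewrite lead_coef_map_inj //; last exact: intr_inj.
  by rewrite -intr_norm ler1z -gtz0_ge1 normr_gt0 lead_coef_eq0 -size_poly_eq0 -lt0n ltnW.
by rewrite size_map_inj_poly //; exact: intr_inj.
Qed.

Lemma primitive_poly_neq0 f : primitive_poly f -> f != 0.
Proof. by rewrite -size_poly_eq0 /primitive_poly; case: (size f); rewrite ?big_ord0. Qed.

Lemma primitive_poly_contents f : primitive_poly f -> `|zcontents f|%N = 1%N.
Proof.
move=> prim; rewrite /zcontents abszM prim muln1.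
have := primitive_poly_neq0 prim; rewrite -lead_coef_eq0.
by case: sgzP.
Qed.

Lemma primitive_const_factor_unit g h : primitive_poly (g * h) -> (size g <= 1)%N ->
  g \is a GRing.unit.
Proof.
move=> prim /size1_polyC g_eq.
have := primitive_poly_contents prim.
rewrite zcontentsM abszM g_eq -alg_polyC zcontentsZ zcontents_monic ?monic1 //.
rewrite mulr1 => /eqP; rewrite muln_eq1 => /andP[/eqP c_abs _].
rewrite alg_polyC; apply: rmorph_unit; apply/unitrPr; exists g`_0.
by rewrite -expr2 -real_normK ?num_real // -abszE c_abs.
Qed.

Lemma absz_horner_unit (g : {poly int}) x : g \is a GRing.unit -> `|g.[x]|%N = 1%N.
Proof.
case/unitrPr=> g' /(congr1 (fun q => `|q.[x]|%N)) /=.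
by rewrite hornerM hornerC abszM => /eqP; rewrite muln_eq1 => /andP[/eqP].
Qed.

Lemma dvdz_horner_derivM (g h : {poly int}) (x m : int) :
  (m %| g.[x])%Z -> (m %| h.[x])%Z -> (m %| (g * h)^`().[x])%Z.
Proof.
move=> mg mh; rewrite derivM hornerD !hornerM.
by apply: rpredD; [apply: dvdz_mull | apply: dvdz_mulr].
Qed.

Unset Implicit Arguments.

Theorem corollary5 (R : realType) (f : {poly int}) (alpha beta : R) (j n d : nat) :
  primitive_poly f ->
  0 < alpha -> alpha < beta ->
  (j < size f)%N ->
  \sum_(i < size f | i != j :> nat) (`|f`_i|%:~R * beta ^+ i)
    < `|f`_j|%:~R * alpha ^+ j ->
  (0 < n)%N -> (0 < d)%N ->
  alpha + d%:R <= n%:R -> n%:R <= beta - d%:R ->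
  ((exists p : nat, prime p /\ `|f.[n%:Z]|%N = (d * p)%N) \/
   (exists p k : nat, [/\ prime p, (0 < k)%N, `|f.[n%:Z]|%N = (d * p ^ k)%N
                      & coprime (p ^ k) `|(f^`()).[n%:Z]|%N])) ->
  irreducible_Zpoly f.
Proof.
(* [alpha < beta], [j < size f] and [0 < n] follow from the other hypotheses. *)
move=> prim alpha_gt0 _ _ dom_f _ d_gt0 alpha_le beta_ge fn_factor.
have lt_dn : (d < n)%N by rewrite -(ltr_nat R); lra.
have domC : dominant_coef (map_poly intr f : {poly algC}) j (n - d)%:R (n + d)%:R.
  rewrite !pmulrn dominant_coef_int -(dominant_coef_int R) -!pmulrn.
  have domR : dominant_coef (map_poly intr f : {poly R}) j alpha beta.
    by rewrite dominant_coef_intr.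
  apply: dominant_coef_le domR; rewrite ?ler0n ?(ltW alpha_gt0) //.
  - by rewrite natrB ?(ltnW lt_dn) //; lra.
  - by rewrite natrD; lra.
have large_factor g h : f = g * h -> (1 < size g)%N -> (d < `|g.[n%:Z]|)%N.
  move=> fgh g_gt1; apply: (far_roots_lt_absz_horner (C := algC)) => // z gz.
  rewrite -pmulrn; apply: (root_dominant_coef_dist (ltnW lt_dn) domC).
  by rewrite fgh rmorphM rootM gz.
have small_factor g h : f = g * h -> (minn `|g.[n%:Z]| `|h.[n%:Z]| <= d)%N.
  move=> fgh; have fn_eq : (`|g.[n%:Z]| * `|h.[n%:Z]| = `|f.[n%:Z]|)%N.
    by rewrite fgh hornerM abszM.
  case: fn_factor => [[p [p_pr fnE]] | [p [k [p_pr k_gt0 fnE coprime_f']]]].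
    exact: prime_split_minn p_pr d_gt0 (etrans fn_eq fnE).
  apply: (prime_power_split_minn p_pr d_gt0 _ (etrans fn_eq fnE)).
  apply: contraL coprime_f' => /andP[pg ph].
  rewrite coprime_pexpl // prime_coprime // negbK -[p]/(`|p%:Z|%N) -dvdzE.
  by rewrite fgh; apply: dvdz_horner_derivM; rewrite dvdzE.
have f_gt1 : (1 < `|f.[n%:Z]|)%N.
  have d_mul_gt1 q : (1 < q)%N -> (1 < d * q)%N by move/leq_trans; apply; rewrite leq_pmull.
  case: fn_factor => [[p [p_pr ->]] | [p [k [p_pr k_gt0 -> _]]]]; apply: d_mul_gt1.
    exact: prime_gt1.
  by rewrite -(exp1n k) ltn_exp2r // prime_gt1.
split; [exact: primitive_poly_neq0 | split].
  by apply: contraTN f_gt1 => /(absz_horner_unit (n%:Z)) ->.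
move=> g h fgh.
have [g_le1 | g_gt1] := leqP (size g) 1.
  by left; apply: (primitive_const_factor_unit (h := h)) g_le1; rewrite -fgh.
have [h_le1 | h_gt1] := leqP (size h) 1.
  by right; apply: (primitive_const_factor_unit (h := g)) h_le1; rewrite mulrC -fgh.
have lt_dg := large_factor g h fgh g_gt1.
have lt_dh := large_factor h g (etrans fgh (mulrC g h)) h_gt1.
by have := small_factor g h fgh; rewrite geq_min leqNgt lt_dg leqNgt lt_dh.
Qed.
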